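(* For parameters $a,b,t>0$ with $1/t<1/a<b<t$, the quantity $$Q(a,b;t)=\frac{I_1+I_3}{I_2}-\frac{J_1+J_3}{J_2}$$ does not depend on $\rho$, and if $Q(a,b;t)=0$ then there is a unique $\rho>0$ for which $I_1+I_3=J_1+J_3$ and $I_2=J_2$ hold.
   Context: Weierstrass data: for real $a,b,t>0$ with $1/t<1/a<b<t$ and $\rho>0$, set $\phi_1=-\rho\,(z+a)^{1/2}(z+1/b)^{-1/2}(z-1/a)^{1/2}(z-b)^{-1/2}[(z+t)(z+1/t)(z-1/t)(z-t)]^{-1/2}dz$ and $\phi_2=\rho^{-1}(z+a)^{-1/2}(z+1/b)^{1/2}(z-1/a)^{-1/2}(z-b)^{1/2}[(z+t)(z+1/t)(z-1/t)(z-t)]^{-1/2}dz$; let $v_1<\dots<v_8$ be $-t,-a,-1/b,-1/t,1/t,1/a,b,t$, and $I_k=\int_{v_k}^{v_{k+1}}|\phi_1|$, $J_k=\int_{v_k}^{v_{k+1}}|\phi_2|$ (integrals of absolute values of the coefficient functions over real intervals). *)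

From Stdlib Require Import Reals Lra ClassicalEpsilon.
Open Scope R_scope.

Definition is_imp_int (f : R -> R) (c d l : R) : Prop :=
  forall eps, 0 < eps -> exists delta, 0 < delta /\
    forall x y, c < x < c + delta -> d - delta < y < d ->
      exists pr : Riemann_integrable f x y, Rabs (RiemannInt pr - l) < eps.

(* The value of the improper integral (chosen by classical description;
   it is unique whenever it exists). *)
Definition imp_int (f : R -> R) (c d : R) : R :=
  epsilon (inhabits 0) (fun l => is_imp_int f c d l).

Definition Pt (t z : R) : R := (z + t) * (z + / t) * (z - / t) * (z - t).

Definition phi1abs (a b t rho z : R) : R :=
  rho * sqrt (Rabs ((z + a) * (z - / a)) / Rabs ((z + / b) * (z - b)))
      / sqrt (Rabs (Pt t z)).

Definition phi2abs (a b t rho z : R) : R :=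
  / rho * sqrt (Rabs ((z + / b) * (z - b)) / Rabs ((z + a) * (z - / a)))
      / sqrt (Rabs (Pt t z)).

Definition vtx (a b t : R) (k : nat) : R :=
  match k with
  | 1%nat => - t | 2%nat => - a | 3%nat => - / b | 4%nat => - / t
  | 5%nat => / t | 6%nat => / a | 7%nat => b | _ => t
  end.

Definition Ik (a b t rho : R) (k : nat) : R :=
  imp_int (phi1abs a b t rho) (vtx a b t k) (vtx a b t (S k)).
Definition Jk (a b t rho : R) (k : nat) : R :=
  imp_int (phi2abs a b t rho) (vtx a b t k) (vtx a b t (S k)).

Definition Qrho (a b t rho : R) : R :=
  (Ik a b t rho 1 + Ik a b t rho 3) / Ik a b t rho 2
  - (Jk a b t rho 1 + Jk a b t rho 3) / Jk a b t rho 2.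

(* Q(a,b;t), evaluated at rho = 1 (the theorem says it is rho-independent). *)
Definition Q (a b t : R) : R := Qrho a b t 1.

(* Scaling: rho enters |phi_1| as a factor rho and |phi_2| as a factor 1/rho, so
   I_k = rho I_k(1), J_k = J_k(1)/rho, Q does not see rho, and the two period
   conditions reduce to rho^2 = J_2(1)/I_2(1) together with Q = 0.  The only analytic
   input is that the six improper integrals exist and are positive: at each endpoint
   the integrand is O(|z - v|^(-1/2)), so it is dominated by a multiple of
   1/sqrt(z - c) + 1/sqrt(d - z), whose integral is explicit, and the integrals over
   the exhausting compact subintervals increase to their supremum. *)
From Stdlib Require Import Reals Lra Lia ClassicalEpsilon FunctionalExtensionality.
From Coquelicot Require Import Coquelicot.
Open Scope R_scope.

Lemma is_imp_int_uniq (f : R -> R) (c d l1 l2 : R) :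
  c < d -> is_imp_int f c d l1 -> is_imp_int f c d l2 -> l1 = l2.
Proof.
  intros Hcd H1 H2. apply Classical_Prop.NNPP. intro Hne.
  set (eps := Rabs (l1 - l2) / 2).
  assert (Heps : 0 < eps) by (apply Rdiv_lt_0_compat; [apply Rabs_pos_lt; lra | lra]).
  destruct (H1 _ Heps) as [d1 [Hd1 P1]]. destruct (H2 _ Heps) as [d2 [Hd2 P2]].
  set (e := Rmin (Rmin d1 d2) ((d - c) / 2)).
  assert (0 < e) by (apply Rmin_pos; [apply Rmin_pos |]; lra).
  assert (e <= d1 /\ e <= d2 /\ e <= (d - c) / 2) as (? & ? & ?).
  { unfold e, Rmin; repeat destruct Rle_dec; lra. }
  destruct (P1 (c + e / 2) (d - e / 2)) as [p1 Q1]; try lra.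
  destruct (P2 (c + e / 2) (d - e / 2)) as [p2 Q2]; try lra.
  rewrite (RiemannInt_P5 p2 p1) in Q2.
  assert (Rabs (l1 - l2) <= Rabs (RiemannInt p1 - l1) + Rabs (RiemannInt p1 - l2)).
  { replace (l1 - l2) with (- (RiemannInt p1 - l1) + (RiemannInt p1 - l2)) by ring.
    rewrite <- (Rabs_Ropp (RiemannInt p1 - l1)). apply Rabs_triang. }
  unfold eps in *. lra.
Qed.

Lemma is_imp_int_unique (f : R -> R) (c d l : R) :
  c < d -> is_imp_int f c d l -> imp_int f c d = l.
Proof.
  intros Hcd H. apply (is_imp_int_uniq f c d); auto.
  unfold imp_int. apply epsilon_spec. now exists l.
Qed.

Lemma Riemann_integrable_close (f : R -> R) (x y l eps : R) :
  ex_RInt f x y -> Rabs (RInt f x y - l) < eps ->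
  exists pr : Riemann_integrable f x y, Rabs (RiemannInt pr - l) < eps.
Proof.
  intros Hex Hlt. exists (ex_RInt_Reals_0 _ _ _ Hex). now rewrite <- RInt_Reals.
Qed.

Lemma is_imp_int_scal (f : R -> R) (c d l k : R) :
  is_imp_int f c d l -> is_imp_int (fun z => k * f z) c d (k * l).
Proof.
  intros H eps Heps.
  assert (Hk : 0 < Rabs k + 1) by (pose proof (Rabs_pos k); lra).
  destruct (H (eps / (Rabs k + 1))) as [delta [Hdelta P]]; [now apply Rdiv_lt_0_compat |].
  exists delta; split; auto. intros x y Hx Hy.
  destruct (P x y Hx Hy) as [pr Hpr].
  pose proof (ex_RInt_Reals_1 _ _ _ pr) as Hex.
  apply Riemann_integrable_close; [exact (ex_RInt_scal (V := R_CompleteNormedModule) f x y k Hex) |].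
  replace (RInt (fun z => k * f z) x y) with (k * RiemannInt pr)
    by (rewrite <- (RInt_Reals _ _ _ pr); symmetry; exact (RInt_scal f x y k Hex)).
  replace (k * RiemannInt pr - k * l) with (k * (RiemannInt pr - l)) by ring.
  rewrite Rabs_mult.
  apply Rle_lt_trans with (Rabs k * (eps / (Rabs k + 1))).
  - apply Rmult_le_compat_l; [apply Rabs_pos | lra].
  - replace (Rabs k * (eps / (Rabs k + 1))) with (eps - eps / (Rabs k + 1)) by (field; lra).
    pose proof (Rdiv_lt_0_compat eps _ Heps Hk). lra.
Qed.

Definition edge_weight (c d z : R) : R := / sqrt (z - c) + / sqrt (d - z).

Lemma ex_RInt_continuous_le (f : R -> R) (x y : R) :
  x <= y -> (forall z, x <= z <= y -> continuous f z) -> ex_RInt f x y.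
Proof.
  intros Hxy Hc. apply (@ex_RInt_continuous R_CompleteNormedModule). intros z Hz.
  rewrite Rmin_left, Rmax_right in Hz by lra. auto.
Qed.

Lemma is_derive_edge_primitive (c d z : R) : c < z < d ->
  is_derive (fun z => 2 * (sqrt (z - c) - sqrt (d - z))) z (edge_weight c d z).
Proof.
  intros Hz. unfold edge_weight.
  assert (0 < sqrt (z - c)) by (apply sqrt_lt_R0; lra).
  assert (0 < sqrt (d - z)) by (apply sqrt_lt_R0; lra).
  auto_derive; [repeat split; lra |]. unfold Rminus in *. field; lra.
Qed.

Lemma continuous_edge_weight (c d z : R) : c < z < d -> continuous (edge_weight c d) z.
Proof.
  intros Hz. apply (ex_derive_continuous (V := R_NormedModule)). unfold edge_weight.
  assert (0 < sqrt (z - c)) by (apply sqrt_lt_R0; lra).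
  assert (0 < sqrt (d - z)) by (apply sqrt_lt_R0; lra).
  auto_derive. unfold Rminus in *. repeat split; lra.
Qed.

Lemma RInt_edge_weight_le (c d x y : R) : c < x -> x <= y -> y < d ->
  RInt (edge_weight c d) x y <= 4 * sqrt (d - c).
Proof.
  intros Hx Hxy Hy.
  assert (Hin : forall z, Rmin x y <= z <= Rmax x y -> c < z < d).
  { intros z Hz. rewrite Rmin_left, Rmax_right in Hz; lra. }
  rewrite (is_RInt_unique _ _ _ _ (is_RInt_derive _ _ _ _
    (fun z Hz => is_derive_edge_primitive c d z (Hin z Hz))
    (fun z Hz => continuous_edge_weight c d z (Hin z Hz)))).
  change (minus ?u ?v) with (u - v).
  assert (sqrt (y - c) <= sqrt (d - c)) by (apply sqrt_le_1_alt; lra).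
  assert (sqrt (d - x) <= sqrt (d - c)) by (apply sqrt_le_1_alt; lra).
  pose proof (sqrt_pos (x - c)). pose proof (sqrt_pos (d - y)).
  lra.
Qed.

Lemma is_imp_int_sup (f : R -> R) (c d B : R) : c < d ->
  (forall z, c < z < d -> continuous f z) -> (forall z, c < z < d -> 0 <= f z) ->
  (forall x y, c < x -> x < y -> y < d -> RInt f x y <= B) ->
  exists l, is_imp_int f c d l /\ forall x y, c < x -> x < y -> y < d -> RInt f x y <= l.
Proof.
  intros Hcd Hc Hp HB.
  assert (Hex : forall x y, c < x -> x <= y -> y < d -> ex_RInt f x y).
  { intros x y ? ? ?. apply ex_RInt_continuous_le; [lra |]. intros; apply Hc; lra. }
  set (E := fun v => exists x y, c < x /\ x < y /\ y < d /\ v = RInt f x y).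
  destruct (completeness E) as [l [Hub Hlub]].
  { exists B. intros v (x & y & ? & ? & ? & ->). auto. }
  { exists (RInt f (c + (d - c) / 3) (c + 2 * (d - c) / 3)).
    exists (c + (d - c) / 3), (c + 2 * (d - c) / 3). repeat split; lra. }
  assert (Hle : forall x y, c < x -> x < y -> y < d -> RInt f x y <= l).
  { intros x y ? ? ?. apply Hub. now exists x, y. }
  exists l. split; auto.
  intros eps Heps.
  assert (exists v, E v /\ l - eps < v) as [v [(x0 & y0 & ? & ? & ? & ->) Hv]].
  { apply Classical_Prop.NNPP. intro Hn.
    enough (l <= l - eps) by lra.
    apply Hlub. intros v Ev. apply Rnot_lt_le. intro Hlt. apply Hn. now exists v. }
  exists (Rmin (x0 - c) (d - y0)). split; [apply Rmin_pos; lra |].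
  intros x y Hx Hy.
  pose proof (Rmin_l (x0 - c) (d - y0)). pose proof (Rmin_r (x0 - c) (d - y0)).
  apply Riemann_integrable_close; [apply Hex; lra |].
  (* the integral over [x,y] exceeds that over [x0,y0] by two nonnegative pieces *)
  assert (Hsplit : RInt f x y = RInt f x x0 + RInt f x0 y0 + RInt f y0 y).
  { rewrite <- (RInt_Chasles f x x0 y), <- (RInt_Chasles f x0 y0 y) by (apply Hex; lra).
    unfold plus; simpl; ring. }
  assert (0 <= RInt f x x0) by (apply RInt_ge_0; [lra | apply Hex; lra | intros; apply Hp; lra]).
  assert (0 <= RInt f y0 y) by (apply RInt_ge_0; [lra | apply Hex; lra | intros; apply Hp; lra]).
  pose proof (Hle x y ltac:(lra) ltac:(lra) ltac:(lra)).
  apply Rabs_def1; lra.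
Qed.

Lemma le_sqrt_div_sqrt (f u C : R) : 0 <= f -> 0 < u -> f ^ 2 * u <= C -> f <= sqrt C / sqrt u.
Proof.
  intros Hf Hu H.
  assert (Hsu : 0 < sqrt u) by now apply sqrt_lt_R0.
  assert (f * sqrt u <= sqrt C).
  { rewrite <- (sqrt_pow2 f Hf), <- sqrt_mult by (try apply pow2_ge_0; lra).
    now apply sqrt_le_1_alt. }
  apply Rmult_le_reg_r with (sqrt u); auto. unfold Rdiv. rewrite Rmult_assoc, Rinv_l; lra.
Qed.

Lemma le_edge_weight_of_sq_bound (f c d z K : R) : c < z < d -> 0 <= f ->
  f ^ 2 * (z - c) * (d - z) <= K -> f <= sqrt (2 * K / (d - c)) * edge_weight c d z.
Proof.
  intros Hz Hf H. unfold edge_weight.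
  assert (0 <= f ^ 2 * (z - c) * (d - z)) by (apply Rmult_le_pos; [apply Rmult_le_pos |]; nra).
  assert (HK : 0 <= 2 * K / (d - c)) by (apply Rdiv_le_0_compat; lra).
  pose proof (sqrt_pos (2 * K / (d - c))).
  pose proof (Rinv_0_lt_compat _ (sqrt_lt_R0 (z - c) ltac:(lra))).
  pose proof (Rinv_0_lt_compat _ (sqrt_lt_R0 (d - z) ltac:(lra))).
  (* the endpoint farther from z is at distance at least (d - c) / 2 *)
  destruct (Rle_dec (z - c) (d - z)).
  - enough (f <= sqrt (2 * K / (d - c)) / sqrt (z - c)) by (unfold Rdiv in *; nra).
    apply le_sqrt_div_sqrt; [lra | lra |].
    apply Rmult_le_reg_r with ((d - z) * (d - c)); [nra |].
    replace (2 * K / (d - c) * ((d - z) * (d - c))) with (2 * K * (d - z)) by (field; lra).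
    nra.
  - enough (f <= sqrt (2 * K / (d - c)) / sqrt (d - z)) by (unfold Rdiv in *; nra).
    apply le_sqrt_div_sqrt; [lra | lra |].
    apply Rmult_le_reg_r with ((z - c) * (d - c)); [nra |].
    replace (2 * K / (d - c) * ((z - c) * (d - c))) with (2 * K * (z - c)) by (field; lra).
    nra.
Qed.

Lemma ex_imp_int_pos (f : R -> R) (c d K : R) : c < d ->
  (forall z, c < z < d -> continuous f z) -> (forall z, c < z < d -> 0 < f z) ->
  (forall z, c < z < d -> f z ^ 2 * (z - c) * (d - z) <= K) ->
  exists l, 0 < l /\ is_imp_int f c d l.
Proof.
  intros Hcd Hc Hp HK.
  set (W := sqrt (2 * K / (d - c))).
  assert (HB : forall x y, c < x -> x < y -> y < d -> RInt f x y <= W * (4 * sqrt (d - c))).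
  { intros x y Hx Hxy Hy.
    assert (Hw : ex_RInt (edge_weight c d) x y).
    { apply ex_RInt_continuous_le; [lra |]. intros; apply continuous_edge_weight; lra. }
    apply Rle_trans with (RInt (fun z => W * edge_weight c d z) x y).
    - apply RInt_le; [lra | | exact (ex_RInt_scal (V := R_CompleteNormedModule) _ _ _ W Hw) |].
      + apply ex_RInt_continuous_le; [lra |]. intros; apply Hc; lra.
      + intros z Hz. apply le_edge_weight_of_sq_bound; [lra | left; apply Hp; lra | apply HK; lra].
    - replace (RInt (fun z => W * edge_weight c d z) x y) with (W * RInt (edge_weight c d) x y)
        by (symmetry; exact (RInt_scal _ _ _ W Hw)).
      apply Rmult_le_compat_l; [apply sqrt_pos | apply RInt_edge_weight_le; lra]. }
  destruct (is_imp_int_sup f c d _ Hcd Hc (fun z Hz => Rlt_le _ _ (Hp z Hz)) HB)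
    as [l [Hl Hle]].
  exists l. split; auto.
  apply Rlt_le_trans with (RInt f (c + (d - c) / 3) (c + 2 * (d - c) / 3)); [| apply Hle; lra].
  apply RInt_gt_0; [lra | intros; apply Hp; lra | intros; apply Hc; lra].
Qed.

Lemma unique_balancing_scale (A B C D : R) : 0 < B -> 0 < D -> A / B = C / D ->
  exists! rho, 0 < rho /\ rho * A = / rho * C /\ rho * B = / rho * D.
Proof.
  intros HB HD HQ.
  assert (HDB : 0 < D / B) by now apply Rdiv_lt_0_compat.
  assert (Hs : 0 < sqrt (D / B)) by now apply sqrt_lt_R0.
  assert (Hss : sqrt (D / B) * sqrt (D / B) = D / B) by (apply sqrt_sqrt; lra).
  (* rho * B = D / rho forces rho ^ 2 = D / B, and then the first equation is A / B = C / D *)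
  exists (sqrt (D / B)). split.
  - split; [exact Hs |].
    assert (HC : C = D / B * A).
    { apply (Rmult_eq_reg_r (/ D)); [| apply Rinv_neq_0_compat; lra].
      change (C / D = D / B * A / D). rewrite <- HQ. field. lra. }
    split; apply (Rmult_eq_reg_l (sqrt (D / B))); try lra;
      rewrite <- Rmult_assoc, Hss; try rewrite HC; field; lra.
  - intros rho (Hr & _ & HrB).
    assert (Hsq : rho * rho = D / B).
    { apply (Rmult_eq_reg_r (rho * B)); [| nra].
      replace (rho * rho * (rho * B)) with (rho * rho * (/ rho * D)) by now rewrite HrB.
      field. lra. }
    rewrite <- Hsq, sqrt_square; lra.
Qed.

Lemma Rdiv_le_compat (n N d D : R) : 0 <= n <= N -> 0 < D <= d -> n / d <= N / D.
Proof.
  intros Hn HD. unfold Rdiv.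
  apply Rmult_le_compat; try lra.
  - left; apply Rinv_0_lt_compat; lra.
  - apply Rinv_le_contravar; lra.
Qed.

Lemma phi1abs_scal (a b t rho : R) : phi1abs a b t rho = fun z => rho * phi1abs a b t 1 z.
Proof. apply functional_extensionality; intro z. unfold phi1abs, Rdiv. ring. Qed.

Lemma phi2abs_scal (a b t rho : R) : phi2abs a b t rho = fun z => / rho * phi2abs a b t 1 z.
Proof. apply functional_extensionality; intro z. unfold phi2abs, Rdiv. rewrite Rinv_1. ring. Qed.

Lemma sqr_sqrt_abs_ratio (k U V W : R) : V <> 0 -> W <> 0 ->
  (k * sqrt (Rabs U / Rabs V) / sqrt (Rabs W)) ^ 2 = k ^ 2 * Rabs U / Rabs V / Rabs W.
Proof.
  intros HV HW.
  assert (0 < Rabs V) by now apply Rabs_pos_lt.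
  assert (0 < sqrt (Rabs W)) by now apply sqrt_lt_R0, Rabs_pos_lt.
  replace ((k * sqrt (Rabs U / Rabs V) / sqrt (Rabs W)) ^ 2)
    with (k ^ 2 * sqrt (Rabs U / Rabs V) ^ 2 / sqrt (Rabs W) ^ 2) by (field; lra).
  rewrite !pow2_sqrt by (try apply Rdiv_le_0_compat; try apply Rabs_pos; lra).
  unfold Rdiv. ring.
Qed.

Lemma sqrt_abs_ratio_pos (k U V W : R) : 0 < k -> U <> 0 -> V <> 0 -> W <> 0 ->
  0 < k * sqrt (Rabs U / Rabs V) / sqrt (Rabs W).
Proof.
  intros Hk HU HV HW.
  apply Rdiv_lt_0_compat; [apply Rmult_lt_0_compat; [exact Hk |] |];
    apply sqrt_lt_R0; [apply Rdiv_lt_0_compat |]; now apply Rabs_pos_lt.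
Qed.

Ltac solve_auto_derive_side :=
  unfold Rminus in *; repeat split;
  first [ assumption | now apply Rabs_no_R0 | now apply Rabs_pos_lt
        | apply Rdiv_lt_0_compat; now apply Rabs_pos_lt
        | apply Rgt_not_eq, sqrt_lt_R0, Rabs_pos_lt; assumption ].

Lemma continuous_phi1abs (a b t rho z : R) :
  (z + a) * (z - / a) <> 0 -> (z + / b) * (z - b) <> 0 -> Pt t z <> 0 ->
  continuous (phi1abs a b t rho) z.
Proof.
  intros. apply (ex_derive_continuous (V := R_NormedModule)).
  unfold phi1abs, Pt in *. auto_derive. solve_auto_derive_side.
Qed.

Lemma continuous_phi2abs (a b t rho z : R) :
  (z + a) * (z - / a) <> 0 -> (z + / b) * (z - b) <> 0 -> Pt t z <> 0 ->
  continuous (phi2abs a b t rho) z.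
Proof.
  intros. apply (ex_derive_continuous (V := R_NormedModule)).
  unfold phi2abs, Pt in *. auto_derive. solve_auto_derive_side.
Qed.

Section Edges.

Variables a b t : R.
Hypotheses (ha : 0 < a) (hb : 0 < b) (ht : 0 < t)
  (h1 : / t < / a) (h2 : / a < b) (h3 : b < t).

Lemma vertex_order : 0 < / t /\ / t < / b /\ / b < a /\ a < t.
Proof.
  assert (0 < / t) by now apply Rinv_0_lt_compat.
  assert (a < t) by (rewrite <- (Rinv_inv a), <- (Rinv_inv t); apply Rinv_lt_contravar; nra).
  assert (/ b < a) by (rewrite <- (Rinv_inv a); apply Rinv_lt_contravar; nra).
  assert (/ t < / b) by (apply Rinv_lt_contravar; nra).
  lra.
Qed.

Lemma vtx_lt (k : nat) : (1 <= k <= 7)%nat -> vtx a b t k < vtx a b t (S k).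
Proof.
  intros Hk. pose proof vertex_order.
  destruct k as [|[|[|[|[|[|[|[|k]]]]]]]]; try lia; cbn [vtx]; lra.
Qed.

Lemma edge_factors_neq0 (k : nat) (z : R) : (1 <= k <= 7)%nat ->
  vtx a b t k < z < vtx a b t (S k) ->
  (z + a) * (z - / a) <> 0 /\ (z + / b) * (z - b) <> 0 /\ Pt t z <> 0.
Proof.
  intros Hk Hz. pose proof vertex_order. unfold Pt.
  destruct k as [|[|[|[|[|[|[|[|k]]]]]]]]; try lia; cbn [vtx] in Hz;
    repeat split; repeat apply Rmult_integral_contrapositive_currified; lra.
Qed.

Let diam := 2 * t.

Let gap := Rmin (Rmin (Rmin (t - a) (a - / b)) (Rmin (/ b - / t) (2 * / t)))
                (Rmin (Rmin (/ a - / t) (b - / a)) (t - b)).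

Lemma gap_le : 0 < gap /\ gap <= t - a /\ gap <= a - / b /\ gap <= / b - / t
  /\ gap <= 2 * / t /\ gap <= / a - / t /\ gap <= b - / a /\ gap <= t - b.
Proof.
  pose proof vertex_order. unfold gap, Rmin. repeat destruct Rle_dec; lra.
Qed.

Ltac rabs_sign := repeat match goal with
  | |- context [Rabs ?x] => first [ rewrite (Rabs_pos_eq x) by lra | rewrite (Rabs_left x) by lra ]
  end.

(* [E] is the integrand with the vanishing factors cancelled: what is left has its
   numerator factors bounded by [2 t] and its denominator factors bounded below by [gap] *)
Ltac edge_sq_bound E :=
  pose proof vertex_order; pose proof gap_le;
  unfold phi1abs, phi2abs; rewrite sqr_sqrt_abs_ratio
    by (unfold Pt; repeat apply Rmult_integral_contrapositive_currified; lra);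
  unfold Pt; rewrite !Rabs_mult; rabs_sign;
  apply Rle_trans with E;
  [ apply Req_le; field;
    (* [field] clears the inverses, leaving side conditions such as [z * t - 1 <> 0] *)
    assert (t * / t = 1) by (field; lra); assert (b * / b = 1) by (field; lra);
    assert (a * / a = 1) by (field; lra); repeat split; nra
  | unfold diam; apply Rdiv_le_compat; split;
    repeat (apply Rmult_le_compat || apply Rmult_le_pos || apply Rmult_lt_0_compat); lra ].

Lemma phi1abs_edge_sq_bound (k : nat) : (1 <= k <= 3)%nat -> exists K, forall z,
  vtx a b t k < z < vtx a b t (S k) ->
  phi1abs a b t 1 z ^ 2 * (z - vtx a b t k) * (vtx a b t (S k) - z) <= K.
Proof.
  intros Hk.
  destruct k as [|[|[|[|k]]]]; try lia; cbn [vtx].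
  - exists (diam * diam * diam / (gap * gap * gap * gap * gap)). intros z Hz.
    edge_sq_bound ((- (z + a)) * (- (z - / a)) * (- a - z)
      / ((- (z + / b)) * (- (z - b)) * (- (z + / t)) * (- (z - / t)) * (- (z - t)))).
  - exists (diam * diam * diam / (gap * gap * gap * gap * gap)). intros z Hz.
    edge_sq_bound ((z + a) * (- (z - / a)) * (z - - a)
      / ((- (z - b)) * (z + t) * (- (z + / t)) * (- (z - / t)) * (- (z - t)))).
  - exists (diam * diam / (gap * gap * gap * gap)). intros z Hz.
    edge_sq_bound ((z + a) * (- (z - / a))
      / ((- (z - b)) * (z + t) * (- (z - / t)) * (- (z - t)))).
Qed.

Lemma phi2abs_edge_sq_bound (k : nat) : (1 <= k <= 3)%nat -> exists K, forall z,
  vtx a b t k < z < vtx a b t (S k) ->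
  phi2abs a b t 1 z ^ 2 * (z - vtx a b t k) * (vtx a b t (S k) - z) <= K.
Proof.
  intros Hk.
  destruct k as [|[|[|[|k]]]]; try lia; cbn [vtx].
  - exists (diam * diam / (gap * gap * gap * gap)). intros z Hz.
    edge_sq_bound ((- (z + / b)) * (- (z - b))
      / ((- (z - / a)) * (- (z + / t)) * (- (z - / t)) * (- (z - t)))).
  - exists (diam * diam * diam / (gap * gap * gap * gap * gap)). intros z Hz.
    edge_sq_bound ((- (z + / b)) * (- (z - b)) * (- / b - z)
      / ((- (z - / a)) * (z + t) * (- (z + / t)) * (- (z - / t)) * (- (z - t)))).
  - exists (diam * diam * diam / (gap * gap * gap * gap * gap)). intros z Hz.
    edge_sq_bound ((z + / b) * (- (z - b)) * (z - - / b)
      / ((z + a) * (- (z - / a)) * (z + t) * (- (z - / t)) * (- (z - t)))).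
Qed.

Lemma Ik_eq_scal (k : nat) : (1 <= k <= 3)%nat ->
  exists L, 0 < L /\ forall rho, Ik a b t rho k = rho * L.
Proof.
  intros Hk. assert (Hk7 : (1 <= k <= 7)%nat) by lia.
  destruct (phi1abs_edge_sq_bound k Hk) as [K HK].
  destruct (ex_imp_int_pos (phi1abs a b t 1) _ _ K (vtx_lt k Hk7)) as [L [HL HIL]];
    [intros z Hz; destruct (edge_factors_neq0 k z Hk7 Hz) as (? & ? & ?) .. | exact HK |].
  - now apply continuous_phi1abs.
  - apply sqrt_abs_ratio_pos; auto; lra.
  - exists L. split; auto. intros rho. unfold Ik. rewrite phi1abs_scal.
    apply is_imp_int_unique; [exact (vtx_lt k Hk7) | now apply is_imp_int_scal].
Qed.

Lemma Jk_eq_scal (k : nat) : (1 <= k <= 3)%nat ->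
  exists L, 0 < L /\ forall rho, Jk a b t rho k = / rho * L.
Proof.
  intros Hk. assert (Hk7 : (1 <= k <= 7)%nat) by lia.
  destruct (phi2abs_edge_sq_bound k Hk) as [K HK].
  destruct (ex_imp_int_pos (phi2abs a b t 1) _ _ K (vtx_lt k Hk7)) as [L [HL HIL]];
    [intros z Hz; destruct (edge_factors_neq0 k z Hk7 Hz) as (? & ? & ?) .. | exact HK |].
  - now apply continuous_phi2abs.
  - apply sqrt_abs_ratio_pos; auto. rewrite Rinv_1; lra.
  - exists L. split; auto. intros rho. unfold Jk. rewrite phi2abs_scal.
    apply is_imp_int_unique; [exact (vtx_lt k Hk7) | now apply is_imp_int_scal].
Qed.

End Edges.

Theorem mainTheorem4 (a b t : R) (ha : 0 < a) (hb : 0 < b) (ht : 0 < t)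
  (h1 : / t < / a) (h2 : / a < b) (h3 : b < t) :
  (forall rho, 0 < rho -> Qrho a b t rho = Q a b t) /\
  (Q a b t = 0 ->
   exists! rho, 0 < rho /\
     Ik a b t rho 1 + Ik a b t rho 3 = Jk a b t rho 1 + Jk a b t rho 3 /\
     Ik a b t rho 2 = Jk a b t rho 2).
Proof.
  pose proof (Ik_eq_scal a b t ha hb ht h1 h2 h3) as HI.
  pose proof (Jk_eq_scal a b t ha hb ht h1 h2 h3) as HJ.
  destruct (HI 1%nat) as (I1 & HI1 & EI1); [lia |].
  destruct (HI 2%nat) as (I2 & HI2 & EI2); [lia |].
  destruct (HI 3%nat) as (I3 & HI3 & EI3); [lia |].
  destruct (HJ 1%nat) as (J1 & HJ1 & EJ1); [lia |].
  destruct (HJ 2%nat) as (J2 & HJ2 & EJ2); [lia |].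
  destruct (HJ 3%nat) as (J3 & HJ3 & EJ3); [lia |].
  assert (HQ : forall rho, 0 < rho -> Qrho a b t rho = (I1 + I3) / I2 - (J1 + J3) / J2).
  { intros rho Hrho. unfold Qrho.
    rewrite EI1, EI2, EI3, EJ1, EJ2, EJ3. field. repeat split; lra. }
  split.
  - intros rho Hrho. unfold Q. rewrite !HQ; lra.
  - intros HQ0. unfold Q in HQ0. rewrite HQ in HQ0 by lra.
    destruct (unique_balancing_scale (I1 + I3) I2 (J1 + J3) J2) as (rho & Hrho & Huniq);
      [lra | lra | lra |].
    exists rho. split.
    + rewrite EI1, EI2, EI3, EJ1, EJ2, EJ3, <- !Rmult_plus_distr_l. exact Hrho.
    + intros r Hr. apply Huniq. rewrite EI1, EI2, EI3, EJ1, EJ2, EJ3 in Hr.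
      now rewrite <- !Rmult_plus_distr_l in Hr.
Qed.
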